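(* Let $p\in\mathbb Z\{x_1,\dots,x_m\}$ be a polynomial identity of the ring $M_n(\mathbb Z)$. Write $p=f-g$ where $f\in\mathbb N\{x_1,\dots,x_m\}$ is the sum of the terms of $p$ with positive coefficient and $g\in\mathbb N\{x_1,\dots,x_m\}$ is the negative of the sum of the terms of $p$ with negative coefficient. Then $(f,g)$ is a semiring$^\dagger$ polynomial identity of $M_n(R)$ for every commutative semiring$^\dagger$ $R$.
   Context: A semiring$^\dagger$ $(R,+,\cdot,1)$ is a set with binary operations such that $(R,+)$ is an abelian semigroup, $(R,\cdot,1)$ is a monoid, and multiplication distributes over addition (no zero element required). $\mathbb Z\{x_1,\dots,x_m\}$ (resp. $\mathbb N\{x_1,\dots,x_m\}$) is the free associative algebra (resp. free $\mathbb N$-semiring$^\dagger$, the monoid semiring over $\mathbb N$ of the free word monoid) on noncommuting indeterminates. $p$ is a polynomial identity of a ring $S$ if $p(r_1,\dots,r_m)=0$ for all $r_i\in S$. A pair $(f,g)$ is a semiring$^\dagger$ polynomial identity of a semiring$^\dagger$ $S$ if $f(r_1,\dots,r_m)=g(r_1,\dots,r_m)$ for all $r_i\in S$. $M_n(R)$ denotes $n\times n$ matrices with the usual operations. *)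

From HB Require Import structures.
From mathcomp Require Import all_boot all_order all_algebra.
Set Implicit Arguments. Unset Strict Implicit. Unset Printing Implicit Defensive.
Import Order.TTheory GRing.Theory Num.Theory.

Record comSemiringD := ComSemiringD {
  sr_car :> Type;
  sr_add : sr_car -> sr_car -> sr_car;
  sr_mul : sr_car -> sr_car -> sr_car;
  sr_one : sr_car;
  sr_addA : forall x y z, sr_add x (sr_add y z) = sr_add (sr_add x y) z;
  sr_addC : forall x y, sr_add x y = sr_add y x;
  sr_mulA : forall x y z, sr_mul x (sr_mul y z) = sr_mul (sr_mul x y) z;
  sr_mulC : forall x y, sr_mul x y = sr_mul y x;
  sr_mul1l : forall x, sr_mul sr_one x = x;
  sr_mul1r : forall x, sr_mul x sr_one = x;
  sr_mulDl : forall x y z, sr_mul (sr_add x y) z = sr_add (sr_mul x z) (sr_mul y z);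
  sr_mulDr : forall x y z, sr_mul x (sr_add y z) = sr_add (sr_mul x y) (sr_mul x z)
}.

Section SemiringDMatrices.
Variable R : comSemiringD.

(* R with a formal zero adjoined (None = 0); only used so that empty sums
   (e.g. the zero polynomial) and empty products have a value.  All entries
   produced by evaluating nonconstant monomials at matrices over R are Some _. *)
Definition oadd (x y : option R) : option R :=
  match x, y with
  | None, _ => y
  | _, None => x
  | Some a, Some b => Some (sr_add a b)
  end.
Definition omul (x y : option R) : option R :=
  match x, y with
  | Some a, Some b => Some (sr_mul a b)
  | _, _ => None
  end.

Variable n : nat.
Definition smx := 'I_n -> 'I_n -> option R.
Definition smx0 : smx := fun _ _ => None.
Definition smx1 : smx := fun i j => if i == j then Some (sr_one R) else None.
Definition smxD (A B : smx) : smx := fun i j => oadd (A i j) (B i j).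
Definition smxM (A B : smx) : smx :=
  fun i j => foldr oadd None [seq omul (A i k) (B k j) | k <- enum 'I_n].

Variable m : nat.
Definition smx_word (X : 'I_m -> smx) (w : seq 'I_m) : smx :=
  foldr (fun i M => smxM (X i) M) smx1 w.
Definition smx_evalN (X : 'I_m -> smx) (ws : seq (seq 'I_m)) (c : seq 'I_m -> nat) : smx :=
  foldr (fun w M => iter (c w) (smxD (smx_word X w)) M) smx0 ws.
End SemiringDMatrices.

Definition smx_of (R : comSemiringD) (n m : nat) (r : 'I_m -> 'I_n -> 'I_n -> R)
  : 'I_m -> smx R n := fun k i j => Some (r k i j).

Definition pos_part (m : nat) (c : seq 'I_m -> int) (w : seq 'I_m) : nat :=
  if (0 <= c w)%R then absz (c w) else 0%N.
Definition neg_part (m : nat) (c : seq 'I_m -> int) (w : seq 'I_m) : nat :=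
  if (c w < 0)%R then absz (c w) else 0%N.

Definition int_eval (m n : nat) (A : 'I_m -> 'M[int]_n) (ws : seq (seq 'I_m))
  (c : seq 'I_m -> int) : 'M[int]_n :=
  (\sum_(w <- ws) ((\prod_(i <- w) A i) *~ c w))%R.

From mathcomp Require Import all_boot all_order all_algebra.
From HB Require Import structures.
From mathcomp Require Import mpoly.
Set Implicit Arguments. Unset Strict Implicit. Unset Printing Implicit Defensive.
Import GRing.Theory Num.Theory.

(** Evaluate the words of p at generic matrices whose entries are commuting
   variables x_(k,a,b).  Entry (i,j) of a word w is a sum of monomials, one for
   each path i -> j labelled by w, so entry (i,j) of p is the integer polynomial
   whose coefficient at a monomial mu is  sum_w c(w) * #{paths of w with monomial mu}.
   Since p is an identity of M_n(Z) this polynomial vanishes on all of Z^N, hence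
   is zero: for every mu the paths with monomial mu counted with weight pos_part c
   and with weight neg_part c are equally many.  Over a commutative semiring the
   (i,j) entry of f (resp. g) is the sum over the first (resp. second) family of
   the products along the paths, and such a product depends only on the monomial
   of the path; so both sums have the same terms. *)

Lemma big_perm_eq_key (R : Type) (idx : R) (op : Monoid.com_law idx)
    (I J : eqType) (proj : I -> J) (rep : J -> I) (F : I -> R) (s1 s2 : seq I) :
  (forall x, F (rep (proj x)) = F x) -> perm_eq (map proj s1) (map proj s2) ->
  \big[op/idx]_(x <- s1) F x = \big[op/idx]_(x <- s2) F x.
Proof.
move=> Frep proj12; rewrite -!(eq_bigr _ (fun x _ => Frep x)).
by rewrite -!(big_map proj xpredT (fun y => F (rep y))); apply: perm_big.
Qed.

Local Open Scope ring_scope.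

Lemma mxMz_entry (V : zmodType) p q (A : 'M[V]_(p, q)) a b z :
  (A *~ z) a b = A a b *~ z.
Proof. by case: z => k; rewrite ?NegzE ?mulrNz ?mxE mulmxnE. Qed.

Section VanishingPolynomials.
Variable R : numDomainType.

Lemma poly_eval_eq0 (q : {poly R}) : (forall t, q.[t] = 0) -> q = 0.
Proof.
move=> q0; apply: (@roots_geq_poly_eq0 _ _ [seq i%:R | i <- iota 0 (size q)]).
- by apply/allP => t _; apply/rootP.
- by rewrite map_inj_uniq ?iota_uniq // => a b /eqP; rewrite eqr_nat => /eqP.
- by rewrite size_map size_iota.
Qed.

Definition ord_snoc k (v : 'I_k -> R) (t : R) (i : 'I_k.+1) : R :=
  oapp v t (insub (val i)).

Lemma ord_snoc_widen k v t (j : 'I_k) : ord_snoc v t (widen_ord (leqnSn k) j) = v j.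
Proof. by rewrite /ord_snoc insubT //= => ?; congr v; apply: val_inj. Qed.

Lemma ord_snoc_max k v t : ord_snoc v t (@ord_max k) = t.
Proof. by rewrite /ord_snoc insubN //= ltnn. Qed.

Lemma mcoeff_muni k (p : {mpoly R[k.+1]}) (mu : 'X_{1..k.+1}) :
  ((muni p)`_(mu ord_max))@_[multinom mu (widen_ord (leqnSn k) i) | i < k] = p@_mu.
Proof.
rewrite muniE coef_sumMXn raddf_sum /=.
under eq_bigr => nu _ do rewrite mcoeffZ mcoeffX.
have split_eq (nu : 'X_{1..k.+1}) : (nu ord_max == mu ord_max) &&
    ([multinom nu (widen_ord (leqnSn k) i) | i < k] ==
     [multinom mu (widen_ord (leqnSn k) i) | i < k]) = (nu == mu).
  apply/idP/idP => [/andP[/eqP e1 /eqP e2]|/eqP-> ]; last by rewrite !eqxx.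
  apply/eqP/mnmP => i; have [j ->|->] := unliftP ord_max i; last by [].
  have -> : lift ord_max j = widen_ord (leqnSn k) j.
    by apply: val_inj; rewrite /= /bump leqNgt ltn_ord.
  by have := congr1 (fun nu' : 'X_{1..k} => nu' j) e2; rewrite !mnmE.
rewrite big_mkcond /=.
transitivity (\sum_(nu <- msupp p) p@_nu * (nu == mu)%:R).
  by apply: eq_bigr => nu _; rewrite -split_eq; case: (_ == _); rewrite ?mulr0.
under eq_bigr => nu _ do rewrite mulr_natr mulrb.
rewrite -big_mkcond /=; have [mu_p|mu_p] := boolP (mu \in msupp p).
  by rewrite -big_filter filter_pred1_uniq ?msupp_uniq // big_seq1.
rewrite (memN_msupp_eq0 mu_p) big_seq_cond big_pred0 // => nu.
by apply/andP => -[nu_p /eqP nu_mu]; move: mu_p; rewrite -nu_mu nu_p.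
Qed.

Lemma meval_snoc_muni k (p : {mpoly R[k.+1]}) v t :
  p.@[ord_snoc v t] = (map_poly (meval v) (muni p)).[t].
Proof.
rewrite mevalE muniE raddf_sum horner_sum /=; apply: eq_bigr => mu _.
rewrite map_polyZ /= map_polyXn hornerZ hornerXn mevalZ mevalX big_ord_recr /=.
rewrite ord_snoc_max mulrA; congr (_ * _ * _).
by apply: eq_bigr => i _; rewrite mnmE ord_snoc_widen.
Qed.

Lemma mpoly_eval_eq0 k (p : {mpoly R[k]}) : (forall v, p.@[v] = 0) -> p = 0.
Proof.
elim: k p => [|k IHk] p p0.
  by rewrite (nvar0_mpolyC p) -(mevalC (fun _ : 'I_0 => 0) p@_0%MM) -nvar0_mpolyC p0.
apply/mpolyP => mu; rewrite mcoeff0 -mcoeff_muni.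
suff -> : (muni p)`_(mu ord_max) = 0 by rewrite mcoeff0.
apply: IHk => v; rewrite -coef_map.
suff -> : map_poly (meval v) (muni p) = 0 by rewrite coef0.
by apply: poly_eval_eq0 => t; rewrite -meval_snoc_muni p0.
Qed.

End VanishingPolynomials.

Section WordPaths.
Variables m n : nat.

(* (k, a, b) stands for the commuting variable x_(k,a,b), the (a,b) entry of the
   k-th generic matrix; enum_rank numbers these variables. *)
Definition mxvar := ('I_m * 'I_n * 'I_n)%type.

Fixpoint word_paths (w : seq 'I_m) (a b : 'I_n) : seq (seq mxvar) :=
  if w is k :: w' then
    flatten [seq [seq (k, a, c) :: p | p <- word_paths w' c b] | c <- enum 'I_n]
  else if a == b then [:: [::]] else [::].

Lemma prodmx_word_paths (R : pzSemiRingType) (A : 'I_m -> 'M[R]_n) w a b :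
  (\prod_(k <- w) A k) a b =
  \sum_(p <- word_paths w a b) \prod_(v <- p) A v.1.1 v.1.2 v.2.
Proof.
elim: w a b => [|k w IHw] a b /=.
  by rewrite big_nil mxE; case: (a == b); rewrite ?big_seq1 ?big_nil.
rewrite big_cons mxE big_flatten big_map /= big_enum /=.
apply: eq_bigr => c _; rewrite IHw mulr_sumr big_map.
by apply: eq_bigr => p _; rewrite big_cons.
Qed.

Definition path_mnm (p : seq mxvar) : 'X_{1..#|{: mxvar}|} :=
  (\sum_(v <- p) U_(enum_rank v))%MM.

Definition path_count w a b (mu : 'X_{1..#|{: mxvar}|}) : nat :=
  count (fun p => path_mnm p == mu) (word_paths w a b).

Lemma count_mem_path_mnm v p : count_mem v p = path_mnm p (enum_rank v).
Proof.
elim: p => [|u p IHp]; first by rewrite /path_mnm big_nil mnm0E.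
rewrite /path_mnm big_cons mnmDE mnm1E -/(path_mnm p) -IHp.
by rewrite (inj_eq enum_rank_inj).
Qed.

Definition mnm_path (mu : 'X_{1..#|{: mxvar}|}) : seq mxvar :=
  flatten [seq nseq (mu (enum_rank v)) v | v <- enum {: mxvar}].

Lemma perm_mnm_path p : perm_eq (mnm_path (path_mnm p)) p.
Proof.
apply/allP => v _; apply/eqP; rewrite [RHS]count_mem_path_mnm /mnm_path.
rewrite count_flatten -map_comp sumnE big_map big_enum /=.
under eq_bigr => u _ do rewrite count_nseq /=.
rewrite (bigD1 v) //= eqxx mul1n big1 ?addn0 // => u /negbTE.
by rewrite eq_sym => ->.
Qed.

Definition weighted_paths ws (d : seq 'I_m -> nat) a b : seq (seq mxvar) :=
  flatten [seq flatten (nseq (d w) (word_paths w a b)) | w <- ws].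

Lemma count_weighted_paths ws d a b mu :
  count_mem mu (map path_mnm (weighted_paths ws d a b)) =
  (\sum_(w <- ws) path_count w a b mu * d w)%N.
Proof.
rewrite count_map count_flatten -map_comp sumnE big_map; apply: eq_bigr => w _.
by rewrite /= count_flatten map_nseq sumn_nseq.
Qed.

Lemma meval_path_mnm (R : comNzRingType) (x : 'I_#|{: mxvar}| -> R) p :
  'X_[path_mnm p].@[x] = \prod_(v <- p) x (enum_rank v).
Proof.
elim: p => [|v p IHp]; first by rewrite /path_mnm !big_nil mpolyX0 meval1.
by rewrite /path_mnm !big_cons mpolyXD mevalM -/(path_mnm p) IHp mevalXU.
Qed.

Lemma path_count_identity (ws : seq (seq 'I_m)) (c : seq 'I_m -> int) :
  (forall A : 'I_m -> 'M[int]_n, int_eval A ws c = 0) ->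
  forall a b mu, \sum_(w <- ws) (path_count w a b mu)%:Z * c w = 0.
Proof.
move=> PI a b mu.
pose Q : {mpoly int[#|{: mxvar}|]} :=
  \sum_(w <- ws) (\sum_(p <- word_paths w a b) 'X_[path_mnm p]) *~ c w.
have -> : \sum_(w <- ws) (path_count w a b mu)%:Z * c w = Q@_mu.
  rewrite raddf_sum; apply: eq_bigr => w _ /=.
  rewrite raddfMz raddf_sum /= -mulrzr intz; congr (_ * _).
  rewrite /path_count -sum1_count big_mkcond -natz natr_sum.
  by apply: eq_bigr => p _; rewrite mcoeffX; case: eqP.
suff -> : Q = 0 by rewrite mcoeff0.
apply: mpoly_eval_eq0 => x.
pose A k : 'M[int]_n := \matrix_(a', b') x (enum_rank (k, a', b')).
have := congr1 (fun M : 'M[int]_n => M a b) (PI A).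
rewrite /int_eval summxE mxE => <-; rewrite raddf_sum; apply: eq_bigr => w _ /=.
rewrite raddfMz raddf_sum /= mxMz_entry prodmx_word_paths; congr (_ *~ _).
apply: eq_bigr => p _; rewrite meval_path_mnm.
by apply: eq_bigr => -[[k a'] b'] _; rewrite mxE.
Qed.

End WordPaths.

Section SemiringDPaths.
Variable R : comSemiringD.

Lemma oaddA : associative (@oadd R).
Proof. by case=> [x|] [y|] [z|] //=; rewrite sr_addA. Qed.
Lemma oaddC : commutative (@oadd R).
Proof. by case=> [x|] [y|] //=; rewrite sr_addC. Qed.
Lemma oadd0 : left_id None (@oadd R).
Proof. by case. Qed.

HB.instance Definition _ :=
  Monoid.isComLaw.Build (option R) None (@oadd R) oaddA oaddC oadd0.
HB.instance Definition _ :=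
  Monoid.isComLaw.Build R (sr_one R) (@sr_mul R) (@sr_mulA R) (@sr_mulC R) (@sr_mul1l R).

Lemma omul_bigr (I : Type) (s : seq I) (F : I -> option R) x :
  omul (Some x) (\big[@oadd R/None]_(i <- s) F i) =
  \big[@oadd R/None]_(i <- s) omul (Some x) (F i).
Proof.
elim: s => [|i s IHs]; first by rewrite !big_nil.
rewrite !big_cons -IHs.
by case: (F i) => [y|]; case: (\big[_/_]_(j <- s) F j) => [z|] //=; rewrite sr_mulDr.
Qed.

Variables (m n : nat) (r : 'I_m -> 'I_n -> 'I_n -> R).

Definition path_weight (p : seq (mxvar m n)) : R :=
  \big[@sr_mul R/sr_one R]_(v <- p) r v.1.1 v.1.2 v.2.

Lemma smx_word_paths w a b :
  smx_word (smx_of r) w a b =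
  \big[@oadd R/None]_(p <- word_paths w a b) Some (path_weight p).
Proof.
elim: w a b => [|k w IHw] a b /=.
  by rewrite /smx1; case: (a == b); rewrite ?big_seq1 ?big_nil // /path_weight big_nil.
rewrite /smxM foldrE big_map [RHS]big_flatten [RHS]big_map.
apply: eq_bigr => c _; rewrite IHw /smx_of omul_bigr big_map.
by apply: eq_bigr => p _; rewrite /path_weight big_cons.
Qed.

Lemma smx_evalN_paths ws d a b :
  smx_evalN (smx_of r) ws d a b =
  \big[@oadd R/None]_(p <- weighted_paths ws d a b) Some (path_weight p).
Proof.
elim: ws => [|w ws IHws] /=; first by rewrite big_nil.
rewrite big_cat -IHws; elim: (d w) => [|k IHk] /=; first by rewrite big_nil.
by rewrite /smxD IHk big_cat smx_word_paths oaddA.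
Qed.

End SemiringDPaths.

Lemma pos_part_sub_neg_part m (c : seq 'I_m -> int) w :
  (pos_part c w)%:Z - (neg_part c w)%:Z = c w.
Proof.
by rewrite /pos_part /neg_part; case: (c w) => k /=; rewrite ?subr0 ?NegzE ?sub0r.
Qed.

Lemma sum_mul_pos_neg_part m (ws : seq (seq 'I_m)) (c : seq 'I_m -> int)
    (d : seq 'I_m -> nat) :
  \sum_(w <- ws) (d w)%:Z * c w = 0 ->
  (\sum_(w <- ws) d w * pos_part c w = \sum_(w <- ws) d w * neg_part c w)%N.
Proof.
move=> d0; apply/eqP; rewrite -eqz_nat -subr_eq0 -!natz !natr_sum -sumrB.
apply/eqP; rewrite -[RHS]d0; apply: eq_bigr => w _.
by rewrite !natrM -mulrBr !natz pos_part_sub_neg_part.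
Qed.

Theorem corollary5p5 (m n : nat) (ws : seq (seq 'I_m)) (c : seq 'I_m -> int) :
  uniq ws ->
  (forall A : 'I_m -> 'M[int]_n, int_eval A ws c = 0%R) ->
  forall (R : comSemiringD) (r : 'I_m -> 'I_n -> 'I_n -> R) (i j : 'I_n),
    smx_evalN (smx_of r) ws (pos_part c) i j = smx_evalN (smx_of r) ws (neg_part c) i j.
Proof.
move=> _ PI R r i j; rewrite !smx_evalN_paths.
apply: (@big_perm_eq_key _ _ _ _ _ (@path_mnm m n) (@mnm_path m n)).
  by move=> p; rewrite /path_weight (perm_big _ (perm_mnm_path p)).
apply/allP => mu _; apply/eqP; rewrite !count_weighted_paths.
exact/sum_mul_pos_neg_part/path_count_identity.
Qed.
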